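(* Let $M$ be a modular lattice of finite length and $x,y\in S(M)$. If $y$ covers $x$ in the partially ordered set $S(M)$ (ordered as in $M$), then $x<y\le x^*$ in $M$.
   Context: $M$ is a modular lattice of finite length (every chain finite) with least element $0$ and greatest element $1$. For $a\in M$: $a^*$ is the join of all elements covering $a$ if $a<1$, and $1^*=1$. An interval $[a,b]$ is \emph{atomistic} if every element of it is a join of atoms of $[a,b]$ (elements covering $a$). The \emph{skeleton} $S(M)$ is the set of least elements of the maximal (under inclusion) atomistic intervals of $M$. *)

From HB Require Import structures.
From mathcomp Require Import all_boot all_order.
Set Implicit Arguments. Unset Strict Implicit. Unset Printing Implicit Defensive.
Import Order.Theory.
Local Open Scope order_scope.

Section ModLat.
Context {disp : Order.disp_t} {T : tbLatticeType disp}.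

Definition modular : Prop :=
  forall x y z : T, x <= z -> x `|` (y `&` z) = (x `|` y) `&` z.

Definition is_chain (C : T -> Prop) : Prop :=
  forall x y, C x -> C y -> (x <= y) \/ (y <= x).

Definition finite_length : Prop :=
  forall C : T -> Prop, is_chain C -> exists s : seq T, forall x, C x -> x \in s.

Definition covers (a b : T) : Prop :=
  a < b /\ forall c, ~ (a < c /\ c < b).

Definition is_lub (A : T -> Prop) (s : T) : Prop :=
  (forall t, A t -> t <= s) /\ (forall u, (forall t, A t -> t <= u) -> s <= u).

(* s = a^* : join of all covers of a if a < 1, and 1^* = 1 *)
Definition is_star (a s : T) : Prop :=
  (a = \top -> s = \top) /\ (a < \top -> is_lub (covers a) s).

Definition in_itv (a b z : T) : Prop := a <= z /\ z <= b.

(* c is the join in the interval [a,b] of the set A (empty join = a) *)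
Definition is_join_in (a b : T) (A : T -> Prop) (c : T) : Prop :=
  in_itv a b c /\ (forall t, A t -> t <= c) /\
  (forall u, in_itv a b u -> (forall t, A t -> t <= u) -> c <= u).

Definition atomistic (a b : T) : Prop :=
  a <= b /\
  forall c, in_itv a b c ->
    exists A : T -> Prop, (forall t, A t -> in_itv a b t /\ covers a t)
                          /\ is_join_in a b A c.

Definition max_atomistic (a b : T) : Prop :=
  atomistic a b /\
  forall a' b', atomistic a' b' ->
    (forall z, in_itv a b z -> in_itv a' b' z) ->
    (forall z, in_itv a b z <-> in_itv a' b' z).

Definition in_skeleton (x : T) : Prop := exists b, max_atomistic x b.

Definition skel_covers (x y : T) : Prop :=
  in_skeleton x /\ in_skeleton y /\ x < y /\
  forall z, in_skeleton z -> ~ (x < z /\ z < y).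

End ModLat.

From mathcomp Require Import all_boot all_order.
From Stdlib Require Import Classical ClassicalEpsilon.
Import Order.Theory.
Local Open Scope order_scope.

(* In a modular lattice of finite length, [e, b] is atomistic iff b is a finite
   join of atoms of [e, b].  Such intervals pass to subintervals [e, c] and [a, b],
   are closed under joins, and transpose: [c, c `|` t] atomistic gives [c `&` t, t]
   atomistic.
   Let [x, b] be maximal atomistic and y cover x in S(M).  If y is not below b, put
   a := y `&` b and let d cover a below y.  Then [a, b `|` d] is atomistic, hence
   contained in a maximal atomistic [c, B].  By transposition [c `&` x, b] is
   atomistic, so c `&` x = x by maximality of [x, b]; thus x <= c <= a < y with c in
   S(M), so c = x, then B = b, and d <= b `&` y = a, a contradiction.  Hence y <= b,
   so y is a join of atoms of [x, b], each of which lies below x^*. *)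

Lemma well_founded_of_no_descending_seq (T : Type) (R : T -> T -> Prop) :
  (forall f : nat -> T, ~ (forall n, R (f n.+1) (f n))) -> well_founded R.
Proof.
move=> noseq z; apply: NNPP => Nz.
have step u : exists v, ~ Acc R u -> R v u /\ ~ Acc R v.
  case: (classic (Acc R u)) => [Au|NAu]; first by exists u.
  apply: NNPP => Nstep; apply: NAu; constructor => v Rvu.
  by apply: NNPP => NAv; apply: Nstep; exists v.
pose g u := proj1_sig (constructive_indefinite_description _ (step u)).
have gP u : ~ Acc R u -> R (g u) u /\ ~ Acc R (g u).
  by rewrite /g; case: constructive_indefinite_description.
pose f n := iter n g z.
have NAf n : ~ Acc R (f n) by elim: n => [|n IH] //=; have [] := gP _ IH.
by apply: (noseq f) => n; exact: (gP _ (NAf n)).1.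
Qed.

Lemma well_founded_minimal {T : Type} {R : T -> T -> Prop} (P : T -> Prop) {z0 : T} :
  well_founded R -> P z0 -> exists z, P z /\ forall z', P z' -> ~ R z' z.
Proof.
move=> wfR; elim/(well_founded_ind wfR): z0 => z0 IH Pz0.
case: (classic (exists z', P z' /\ R z' z0)) => [[z' [Pz' Rz']]|Nz].
  exact: IH Rz' Pz'.
by exists z0; split=> // z' Pz' Rz'; apply: Nz; exists z'.
Qed.

Section ModularFiniteLength.
Context {disp : Order.disp_t} {M : tbLatticeType disp}.
Hypothesis Hmod : @modular disp M.
Hypothesis Hfin : @finite_length disp M.
Implicit Types a b c e p q s t u v x y z : M.

Lemma lt_le_neq a b : a < b <-> a <= b /\ a <> b.
Proof.
rewrite lt_neqAle; split; first by case/andP=> /eqP.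
by case=> leab neab; apply/andP; split=> //; apply/eqP.
Qed.

Lemma covers_le {e t} : covers e t -> e <= t.
Proof. by case=> /ltW. Qed.

Lemma covers_intro a b :
  a < b -> (forall c, a <= c -> c <= b -> c = a \/ c = b) -> covers a b.
Proof.
move=> ltab between; split=> // c [ltac ltcb].
by case: (between c (ltW ltac) (ltW ltcb)) => E; move: ltac ltcb; rewrite E ltxx.
Qed.

Lemma covers_between {e t c} : covers e t -> e <= c -> c <= t -> c = e \/ c = t.
Proof.
move=> [_ Ncov] lec lect.
case: (e =P c) => [<-|Nec]; first by left.
case: (c =P t) => [->|Nct]; first by right.
by case: (Ncov c); rewrite !lt_neqAle lec lect !andbT; split; apply/eqP.
Qed.

Lemma covers_join_eq {p c s} : covers p c -> s <= c -> ~ s <= p -> p `|` s = c.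
Proof.
move=> Hpc lesc Nsp.
have lepsc : p `|` s <= c by rewrite leUx lesc covers_le.
have [E|//] := covers_between Hpc (leUl p s) lepsc.
by case: Nsp; rewrite -E leUr.
Qed.

Lemma covers_meet_eq {e t u} : covers e t -> e <= u -> ~ t <= u -> t `&` u = e.
Proof.
move=> Het leeu Ntu.
have letue : e <= t `&` u by rewrite lexI leeu covers_le.
have [//|E] := covers_between Het letue (leIl t u).
by case: Ntu; rewrite -E leIr.
Qed.

Lemma covers_transpose_up x y : covers (x `&` y) x -> covers y (x `|` y).
Proof.
move=> Hc; apply: covers_intro => [|z leyz lezxy].
  rewrite lt_neqAle leUr andbT; apply: contraTneq (Hc.1) => E.
  by rewrite meet_l ?ltxx // E leUl.
have lexyz : x `&` y <= x `&` z by rewrite lexI leIl (le_trans (leIr y x) leyz).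
case: (covers_between Hc lexyz (leIl x z)) => E; [left | right].
  by have := Hmod y x z leyz; rewrite E join_l ?leIr // joinC meet_r // => ->.
by apply: le_anti; rewrite lezxy leUx leyz -E leIr.
Qed.

Lemma covers_transpose_down x y : covers y (x `|` y) -> covers (x `&` y) x.
Proof.
move=> Hc; apply: covers_intro => [|z lexyz lezx].
  rewrite lt_neqAle leIl andbT; apply: contraTneq (Hc.1) => E.
  by rewrite join_r ?ltxx // -E leIr.
have lezyxy : z `|` y <= x `|` y by rewrite leUx leUr (le_trans lezx (leUl x y)).
case: (covers_between Hc (leUr y z) lezyxy) => E; [left | right].
  by apply: le_anti; rewrite lexyz lexI lezx -E leUl.
have := Hmod z y x lezx; rewrite E meetC (join_l lexyz) meet_r ?leUl //.
Qed.

Lemma covers_join_atom {e t} u : covers e t -> e <= u -> ~ t <= u -> covers u (t `|` u).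
Proof.
by move=> Het leeu Ntu; apply: covers_transpose_up; rewrite (covers_meet_eq Het leeu Ntu).
Qed.

Lemma covers_exchange {e s' u s} :
  covers e s' -> covers s' u -> covers s u -> e <= s -> ~ s <= s' -> covers e s.
Proof.
move=> Hes' Hs'u Hsu lees Nss'.
have Es's : s' `|` s = u := covers_join_eq Hs'u (covers_le Hsu) Nss'.
have Hmeet : covers (s `&` s') s by apply: covers_transpose_down; rewrite joinC Es's.
have lees's : e <= s `&` s' by rewrite lexI lees covers_le.
case: (covers_between Hes' lees's (leIr s' s)) => [<- //|E].
by move: Hsu.1; rewrite -Es's join_r ?ltxx // -E leIl.
Qed.

Lemma no_monotone_seq (f : nat -> M) :
  ~ (forall m n, (m < n)%N -> f m < f n \/ f n < f m).
Proof.
move=> mono.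
have chain : is_chain (fun z => exists n, z = f n).
  move=> _ _ [m ->] [n ->]; case: (ltngtP m n) => [ltmn|ltnm|->]; last by left.
  - by case: (mono m n ltmn) => /ltW; [left|right].
  - by case: (mono n m ltnm) => /ltW; [right|left].
have [s Hs] := Hfin _ chain.
have injf : injective f.
  move=> m n E; case: (ltngtP m n) => // [ltmn|ltnm].
  - by case: (mono m n ltmn); rewrite E ltxx.
  - by case: (mono n m ltnm); rewrite E ltxx.
have uniq_f : uniq (map f (iota 0 (size s).+1)) by rewrite map_inj_uniq ?iota_uniq.
have sub_f : {subset map f (iota 0 (size s).+1) <= s}.
  by move=> z /mapP [n _ ->]; apply: Hs; exists n.
by have := uniq_leq_size uniq_f sub_f; rewrite size_map size_iota ltnn.
Qed.

Lemma strict_chain_well_founded (r : rel M) :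
  (forall a b, r a b -> a < b \/ b < a) -> transitive r -> well_founded r.
Proof.
move=> r_lt r_trans; apply: well_founded_of_no_descending_seq => f desc.
apply: (@no_monotone_seq f) => m n ltmn; suff /r_lt [] : r (f n) (f m) by [right|left].
elim: n ltmn => // n IH; rewrite ltnS leq_eqVlt => /orP [/eqP ->|/IH]; first exact: desc.
exact: r_trans (desc n).
Qed.

Lemma lt_well_founded : well_founded (fun a b : M => a < b).
Proof. by apply: strict_chain_well_founded => [a b|]; [left | exact: lt_trans]. Qed.

Lemma gt_well_founded : well_founded (fun a b : M => b < a).
Proof.
apply: strict_chain_well_founded => [a b|b a c ltab ltbc]; first by right.
exact: lt_trans ltbc ltab.
Qed.

Lemma exists_cover_le {a b} : a < b -> exists2 t, covers a t & t <= b.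
Proof.
move=> ltab.
have [t [[ltat letb] tmin]] :=
  well_founded_minimal (fun t => a < t /\ t <= b) lt_well_founded (conj ltab (lexx b)).
exists t => //; split=> // c [ltac ltct].
by apply: (tmin c) => //; split=> //; exact: le_trans (ltW ltct) letb.
Qed.

Lemma join_distl a u v : a `|` (u `|` v) = (a `|` u) `|` (a `|` v).
Proof. by rewrite -{1}[a]joinxx joinACA. Qed.

(* Allowing t = e keeps lists of atoms stable under t |-> a `|` t and t |-> t `&` a. *)
Definition covers_or_eq e t := t = e \/ covers e t.

Definition atom_join e b :=
  exists2 L : seq M, {in L, forall t, covers_or_eq e t} & e `|` \join_(t <- L) t = b.

Lemma covers_or_eq_le {e t} : covers_or_eq e t -> e <= t.
Proof. by case=> [->|/covers_le]. Qed.

Lemma mem_le_join e (L : seq M) t : t \in L -> t <= e `|` \join_(u <- L) u.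
Proof. by move=> tL; apply: le_trans (leUr _ e); exact: joins_sup_seq. Qed.

Lemma atom_join_ge {e b} : atom_join e b -> e <= b.
Proof. by case=> L _ <-; exact: leUl. Qed.

Lemma atom_join_refl e : atom_join e e.
Proof. by exists [::]; rewrite ?big_nil ?joinx0. Qed.

Lemma atom_join_atom {e t} : covers_or_eq e t -> atom_join e t.
Proof.
move=> Het; exists [:: t]; first by move=> u; rewrite inE => /eqP ->.
by rewrite big_seq1 join_r ?covers_or_eq_le.
Qed.

Lemma atom_joinU {e u v} : atom_join e u -> atom_join e v -> atom_join e (u `|` v).
Proof.
move=> [L1 HL1 <-] [L2 HL2 <-]; exists (L1 ++ L2).
  by move=> t; rewrite mem_cat => /orP [/HL1|/HL2].
by rewrite -join_distl big_cat.
Qed.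

Lemma atom_join_joins e (L : seq M) :
  {in L, forall t, atom_join e (e `|` t)} -> atom_join e (e `|` \join_(t <- L) t).
Proof.
elim: L => [|t L IH] HL; first by rewrite big_nil joinx0; exact: atom_join_refl.
rewrite big_cons join_distl; apply: atom_joinU; first exact/HL/mem_head.
by apply: IH => u uL; apply: HL; rewrite inE uL orbT.
Qed.

Lemma atom_join_exists_atom {e q p} : atom_join e q -> e <= p -> ~ q <= p ->
  exists2 s, covers e s & s <= q /\ ~ s <= p.
Proof.
move=> [L HL <-] leep Nqp.
have [allp|/allPn [t tL /negP Ntp]] := boolP (all (<= p) L).
  by case: Nqp; rewrite leUx leep; apply/joinsP_seq => t tL _; exact: (allP allp).
case: (HL t tL) => [Ete|Het]; first by case: Ntp; rewrite Ete.
by exists t => //; split=> //; exact: mem_le_join.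
Qed.

Lemma atom_meet_join_atom {e t s' b c} :
  covers e t -> covers e s' -> s' <= b -> ~ t <= b ->
  e <= c -> ~ t <= c -> ~ s' <= c -> s' <= t `|` c ->
  covers e (c `&` (t `|` s')) /\ ~ c `&` (t `|` s') <= b.
Proof.
move=> Het Hes' les'b Ntb leec Ntc Ns'c les'tc.
have Nts' : ~ t <= s' by move=> lets'; apply: Ntb; exact: le_trans lets' les'b.
have Hs'u : covers s' (t `|` s') := covers_join_atom s' Het (covers_le Hes') Nts'.
set s := c `&` (t `|` s').
have Hsu : covers s (t `|` s').
  rewrite /s meetC; apply: covers_transpose_down.
  have -> : (t `|` s') `|` c = t `|` c.
    by apply: le_anti; rewrite !leUx leUl les'tc leUr /= (le_trans (leUl t s') (leUl _ c)) leUr.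
  exact: covers_join_atom c Het leec Ntc.
have Nss' : ~ s <= s'.
  move=> less'; case: (covers_between Hsu less' (leUr s' t)) => E.
    by apply: Ns'c; rewrite E leIl.
  by apply: Nts'; rewrite E leUl.
have lees : e <= s by rewrite lexI leec (le_trans (covers_le Het) (leUl _ _)).
split; first exact: covers_exchange Hes' Hs'u Hsu lees Nss'.
move=> lesb; apply: Nss'.
have : s <= (s' `|` t) `&` b by rewrite lexI lesb joinC leIr.
have leeb : e <= b := le_trans (covers_le Hes') les'b.
by rewrite -Hmod // (covers_meet_eq Het leeb Ntb) join_l ?(covers_le Hes').
Qed.

(* If t <= c, then t itself is the atom.  Otherwise c is covered by t `|` c, and
   transposing gives c `&` b covered by q := (t `|` c) `&` b; an atom s' of [e, b]
   below q but not below c yields the atom c `&` (t `|` s'). *)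
Lemma atom_below_cover {e t b c} :
  covers e t -> ~ t <= b -> e <= b -> (forall z, e <= z -> z <= b -> atom_join e z) ->
  e <= c -> c <= t `|` b -> ~ c <= b -> exists2 s, covers e s & s <= c /\ ~ s <= b.
Proof.
move=> Het Ntb leeb lowb leec lectb Ncb.
have [letc|/negP Ntc] := boolP (t <= c); first by exists t.
have Ecb : c `|` b = t `|` b.
  by rewrite joinC; apply: covers_join_eq (covers_join_atom b Het leeb Ntb) lectb Ncb.
set q := (t `|` c) `&` b.
have Ecq : q `|` c = t `|` c.
  rewrite joinC /q meetC Hmod ?leUr // Ecb meet_r //.
  by rewrite leUx leUl (le_trans lectb) // leUx leUl leUr.
have Hq : covers (c `&` b) q.
  have -> : c `&` b = q `&` c by rewrite /q meetAC (meet_r (leUr c t)).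
  by apply: covers_transpose_down; rewrite Ecq; exact: covers_join_atom c Het leec Ntc.
have leeq : e <= q by rewrite lexI leeb (le_trans leec (leUr _ _)).
have leecb : e <= c `&` b by rewrite lexI leec leeb.
have Nqcb : ~ q <= c `&` b by rewrite (lt_geF Hq.1).
have [s' Hes' [les'q Ns'cb]] := atom_join_exists_atom (lowb q leeq (leIr _ _)) leecb Nqcb.
have les'b : s' <= b := le_trans les'q (leIr _ _).
have Ns'c : ~ s' <= c by move=> les'c; apply: Ns'cb; rewrite lexI les'c.
have les'tc : s' <= t `|` c := le_trans les'q (leIl _ _).
have [Hes Nsb] := atom_meet_join_atom Het Hes' les'b Ntb leec Ntc Ns'c les'tc.
by exists (c `&` (t `|` s')) => //; split=> //; exact: leIl.
Qed.

Lemma atom_join_lower {e b c} : atom_join e b -> e <= c -> c <= b -> atom_join e c.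
Proof.
move=> [L]; elim: L b c => [|t L IH] _ c HL <- leec.
  rewrite big_nil joinx0 => lece.
  have -> : c = e by apply/le_anti; rewrite lece leec.
  exact: atom_join_refl.
set b := e `|` \join_(u <- L) u.
have lowb z : e <= z -> z <= b -> atom_join e z.
  by apply: IH => // u uL; apply: HL; rewrite inE uL orbT.
rewrite big_cons joinCA -/b => lectb.
have [lecb|/negP Ncb] := boolP (c <= b); first exact: lowb.
have [Ete|Het] := HL t (mem_head t L).
  by case: Ncb; rewrite -(join_r (_ : t <= b)) // Ete leUl.
have Ntb : ~ t <= b by move=> letb; apply: Ncb; rewrite -(join_r letb).
have leeb : e <= b := leUl _ _.
have [s Hes [lesc Nsb]] := atom_below_cover Het Ntb leeb lowb leec lectb Ncb.
have Htb : covers b (t `|` b) := covers_join_atom b Het leeb Ntb.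
have Hcb : covers (c `&` b) c.
  by apply: covers_transpose_down; rewrite joinC (covers_join_eq Htb lectb Ncb).
have Nscb : ~ s <= c `&` b by move=> lescb; apply: Nsb; exact: le_trans lescb (leIr _ _).
rewrite -(covers_join_eq Hcb lesc Nscb).
apply: atom_joinU (atom_join_atom (or_intror Hes)).
by apply: lowb (leIr _ _); rewrite lexI leec leeb.
Qed.

Lemma atom_join_atomistic {e b} : atom_join e b -> atomistic e b.
Proof.
move=> Hb; split=> [|c [leec lecb]]; first exact: atom_join_ge.
have [L HL Ec] := atom_join_lower Hb leec lecb.
exists (fun t => t \in L /\ covers e t); split.
  move=> t [tL Het]; split=> //; split; first exact: covers_le.
  by apply: le_trans lecb; rewrite -Ec mem_le_join.
split=> //; split=> [t [tL _]|u [leeu _] ub]; first by rewrite -Ec mem_le_join.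
rewrite -Ec leUx leeu; apply/joinsP_seq => t tL _.
by case: (HL t tL) => [->|Het] //; exact: ub.
Qed.

Lemma atomistic_atom_join {e b} : atomistic e b -> atom_join e b.
Proof.
move=> [leeb atb]; have [A [HA [_ [ubA leastA]]]] := atb b (conj leeb (lexx b)).
pose P m := exists2 L : seq M, (forall t, t \in L -> A t) & e `|` \join_(t <- L) t = m.
have P0 : P e by exists [::]; rewrite ?big_nil ?joinx0.
have [m [[L LA Em] mmax]] := well_founded_minimal P gt_well_founded P0.
have lemb : m <= b by rewrite -Em leUx leeb; apply/joinsP_seq => t /LA /ubA.
have lebm : b <= m.
  apply: leastA => [|t At]; first by split=> //; rewrite -Em leUl.
  apply/negPn/negP => Ntm; apply: (mmax (t `|` m)).
    exists (t :: L); first by move=> u; rewrite inE => /orP [/eqP ->|/LA].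
    by rewrite big_cons joinCA Em.
  by rewrite lt_neqAle leUr andbT; apply: contra Ntm => /eqP ->; exact: leUl.
exists L => [t /LA /HA [_ Het]|]; first by right.
by rewrite Em; apply: le_anti; rewrite lemb lebm.
Qed.

Lemma atom_join_up {x b} a : atom_join x b -> x <= a -> a <= b -> atom_join a b.
Proof.
move=> [L HL <-] lexa leab; rewrite -(join_r leab) joinA (join_l lexa).
apply: atom_join_joins => t tL; apply: atom_join_atom.
have [leta|/negP Nta] := boolP (t <= a); first by left; rewrite join_l.
case: (HL t tL) => [Etx|Hxt]; first by case: Nta; rewrite Etx.
by right; rewrite joinC; exact: covers_join_atom a Hxt lexa Nta.
Qed.

Lemma atom_join_transpose {c B} t : atom_join c B -> c `|` t <= B -> atom_join (c `&` t) t.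
Proof.
move=> HB lectB; have [L HL Ect] := atom_join_lower HB (leUl c t) lectB.
have Es s : s \in L -> c `|` (t `&` s) = s.
  by move=> sL; rewrite Hmod ?(covers_or_eq_le (HL s sL)) // meet_r // -Ect mem_le_join.
exists [seq s `&` t | s <- L].
  move=> _ /mapP [s sL ->]; case: (HL s sL) => [->|Hcs]; first by left.
  right; have <- : (s `&` t) `&` c = c `&` t by rewrite meetAC (meet_r (covers_le Hcs)).
  by apply: covers_transpose_down; rewrite joinC meetC Es.
rewrite big_map; set W := _ `|` _.
have leWt : W <= t by rewrite leUx leIr; apply/joinsP_seq => s _ _; exact: leIr.
have lectW : c `&` t <= W := leUl _ _.
have lectWc : c `|` t <= W `|` c.
  rewrite -Ect leUx leUr; apply/joinsP_seq => s sL _; rewrite -(Es s sL) leUx leUr meetC.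
  apply: (le_trans _ (leUl W c)); apply: (le_trans _ (leUr _ _)).
  exact: (@joins_sup_seq _ _ _ L xpredT (fun j => j `&` t) s sL).
apply: le_anti; rewrite leWt /=.
have := Hmod W c t leWt; rewrite (join_l lectW) => ->.
by rewrite lexI lexx andbT (le_trans (leUr t c) lectWc).
Qed.

Lemma atom_join_meet_base {x b c B} : atom_join x b -> atom_join c B ->
  c `|` x <= b -> b <= B -> atom_join (c `&` x) b.
Proof.
move=> Hx Hc lecxb lebB; have [L HL Eb] := Hx.
have Hcx : atom_join (c `&` x) x := atom_join_transpose x Hc (le_trans lecxb lebB).
have Hxc : atom_join (c `&` x) c by rewrite meetC; apply: (atom_join_transpose c Hx); rewrite joinC.
have Hf : atom_join (c `&` x) (c `|` x) := atom_joinU Hxc Hcx.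
have lecxt t : t \in L -> c `&` x <= t.
  by move=> tL; apply: le_trans (leIr _ _) (covers_or_eq_le (HL t tL)).
have <- : (c `&` x) `|` \join_(t <- x :: L) t = b.
  by rewrite big_cons /= Eb join_r // (le_trans (leIr x c)) // -Eb leUl.
apply: atom_join_joins => t; rewrite inE => /orP [/eqP ->|tL].
  by rewrite join_r ?leIr.
rewrite join_r ?lecxt //.
have [letf|/negP Ntf] := boolP (t <= c `|` x); first exact: atom_join_lower Hf (lecxt t tL) letf.
have [Etx|Hxt] := HL t tL; first by case: Ntf; rewrite Etx leUr.
have <- : c `&` t = c `&` x.
  by rewrite -{1}(meet_l (leUl c x)) -meetA (meetC _ t) (covers_meet_eq Hxt (leUr x c) Ntf).
apply: (atom_join_transpose t Hc).
by rewrite leUx (le_trans (leUl c x) (le_trans lecxb lebB)) (le_trans _ lebB) // -Eb mem_le_join.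
Qed.

Lemma itv_extension_well_founded :
  well_founded (fun I J : M * M => [/\ I.1 <= J.1, J.2 <= I.2 & I <> J]).
Proof.
case=> a b; elim/(well_founded_ind lt_well_founded): a b => a IHa b.
elim/(well_founded_ind gt_well_founded): b => b IHb.
constructor=> -[a' b'] [/= lea'a lebb' Nab].
case: (a' =P a) => [Ea|Na]; last by apply: IHa; apply/lt_le_neq.
by subst; apply: IHb; apply/lt_le_neq; split=> // E; apply: Nab; rewrite E.
Qed.

Lemma exists_max_atomistic {a b} : atomistic a b ->
  exists c B, [/\ max_atomistic c B, c <= a & b <= B].
Proof.
move=> Hab.
have [[c B] [[/= HcB leca lebB] Bmax]] := well_founded_minimal
  (fun I => [/\ atomistic I.1 I.2, I.1 <= a & b <= I.2]) itv_extension_well_founded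
  (z0 := (a, b)) (And3 Hab (lexx a) (lexx b)).
exists c, B; split=> //; split=> // a' b' Ha'b' sub.
case: ((a', b') =P (c, B)) => [[-> ->] //|NE].
have lecB : c <= B by case: HcB.
have [lea'c _] := sub c (conj (lexx c) lecB).
have [_ leBb'] := sub B (conj lecB (lexx B)).
by case: (Bmax (a', b')); split; rewrite /= ?(le_trans lea'c) ?(le_trans lebB).
Qed.

Lemma max_atomistic_eq {a b a' b'} : max_atomistic a b -> atomistic a' b' ->
  a' <= a -> b <= b' -> a' = a /\ b' = b.
Proof.
move=> [[leab _] abmax] Ha'b' lea'a lebb'.
have leab' : a' <= b' by case: Ha'b'.
have E := abmax a' b' Ha'b' (fun z '(conj leaz lezb) =>
  conj (le_trans lea'a leaz) (le_trans lezb lebb')).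
have [leaa' _] := (E a').2 (conj (lexx a') leab').
have [_ leb'b] := (E b').2 (conj leab' (lexx b')).
by split; apply: le_anti; rewrite ?lea'a ?leaa' ?lebb' ?leb'b.
Qed.

Lemma max_atomistic_base_le {x b c B} : max_atomistic x b -> atomistic c B ->
  c `|` x <= b -> b <= B -> x <= c.
Proof.
move=> Hxb HcB lecxb lebB.
have Hb := atom_join_meet_base (atomistic_atom_join Hxb.1) (atomistic_atom_join HcB) lecxb lebB.
have [Ecx _] := max_atomistic_eq Hxb (atom_join_atomistic Hb) (leIr x c) (lexx b).
by rewrite -Ecx leIl.
Qed.

Lemma skel_covers_le_top {x y b} : skel_covers x y -> max_atomistic x b -> y <= b.
Proof.
move=> [_ [_ [ltxy Nbetween]]] Hxb; have [[lexb _] _] := Hxb.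
apply/negPn/negP => Nyb; set a := y `&` b.
have lexa : x <= a by rewrite lexI (ltW ltxy) lexb.
have ltay : a < y by rewrite lt_neqAle leIl andbT; apply: contra Nyb => /eqP <-; exact: leIr.
have [d Had ledy] := exists_cover_le ltay.
have Habd : atomistic a (b `|` d).
  apply: atom_join_atomistic; apply: atom_joinU (atom_join_atom (or_intror Had)).
  exact: atom_join_up a (atomistic_atom_join Hxb.1) lexa (leIr _ _).
have [c [B [HcB leca lebdB]]] := exists_max_atomistic Habd.
have lecb : c <= b := le_trans leca (leIr _ _).
have lexc : x <= c.
  by apply: max_atomistic_base_le Hxb HcB.1 _ (le_trans (leUl b d) lebdB); rewrite leUx lecb.
have Exc : x = c.
  have Nltxc : ~ x < c.
    by move=> ltxc; apply: (Nbetween c); [exists B | split=> //; exact: le_lt_trans leca ltay].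
  by move: lexc; rewrite le_eqVlt => /orP [/eqP //|/Nltxc].
rewrite -Exc in HcB; have [_ EB] := max_atomistic_eq Hxb HcB.1 (lexx x) (le_trans (leUl b d) lebdB).
have leda : d <= a by rewrite lexI ledy -EB (le_trans (leUr d b) lebdB).
by rewrite (lt_geF Had.1) in leda.
Qed.

Lemma atomistic_le_star {x b y xs} : atomistic x b -> x < y -> y <= b -> is_star x xs -> y <= xs.
Proof.
move=> [lexb atb] ltxy leyb [_ star]; have [ubxs leastxs] := star (lt_le_trans ltxy (lex1 y)).
have [t Hxt _] := exists_cover_le ltxy.
have lexxs : x <= xs := le_trans (covers_le Hxt) (ubxs t Hxt).
have [A [HA [_ [ubA leastA]]]] := atb y (conj (ltW ltxy) leyb).
have leyxsb : y <= xs `&` b.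
  apply: leastA => [|s As]; first by split; rewrite ?lexI ?lexxs ?lexb ?leIr.
  by have [[_ lesb] Hxs] := HA s As; rewrite lexI lesb ubxs.
exact: le_trans leyxsb (leIl _ _).
Qed.

End ModularFiniteLength.

Theorem lemma6p3 (disp : Order.disp_t) (M : tbLatticeType disp)
  (Hmod : @modular disp M) (Hfin : @finite_length disp M) (x y : M) :
  skel_covers x y ->
  x < y /\ (forall xs : M, is_star x xs -> y <= xs).
Proof.
move=> Hxy; have [[b Hxb] [_ [ltxy _]]] := Hxy; split=> // xs.
exact: (atomistic_le_star Hfin Hxb.1 ltxy (skel_covers_le_top Hmod Hfin Hxy Hxb)).
Qed.
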